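(* Let $\mathbf B_n$ be the $n$-th Bell number. Then $\lim_{n\to\infty}\mathbf B_n/\alpha_n(1\text{-}23\text{-}4)=0$.
   Context: A permutation $\pi=\pi_1\cdots\pi_n$ of $\{1,\dots,n\}$ contains the generalized pattern $1\text{-}23\text{-}4$ if there are indices $a<b<b+1<c$ with $\pi_a<\pi_b<\pi_{b+1}<\pi_c$; otherwise it avoids it. $\alpha_n(1\text{-}23\text{-}4)$ is the number of permutations of $\{1,\dots,n\}$ avoiding it. The Bell number $\mathbf B_n$ is the number of set partitions of an $n$-element set. *)

From HB Require Import structures.
From mathcomp Require Import all_boot all_order all_algebra all_fingroup.

Set Implicit Arguments. Unset Strict Implicit. Unset Printing Implicit Defensive.

(* s : 'S_n contains 1-23-4: indices a < b, b' = b+1, b' < c with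
   s a < s b < s b' < s c.  (Values 0..n-1 instead of 1..n: relative order
   is all that matters.) *)
Definition contains_1_23_4 (n : nat) (s : 'S_n) : bool :=
  [exists a : 'I_n, exists b : 'I_n, exists b' : 'I_n, exists c : 'I_n,
    [&& (a < b)%N, val b' == (val b).+1, (b' < c)%N,
        (s a < s b)%N, (s b < s b')%N & (s b' < s c)%N]].

Definition avoids_1_23_4 (n : nat) (s : 'S_n) : bool := ~~ contains_1_23_4 s.

Definition alpha_1_23_4 (n : nat) : nat := #|[set s : 'S_n | avoids_1_23_4 s]|.

Definition bell (n : nat) : nat :=
  #|[set P : {set {set 'I_n}} | partition P [set: 'I_n]]|.

(* Encode a set partition by the map sending each element to the least element
   of its block.  Splitting on the block of the last element gives
   B_{m+1} <= sum_pi (b(pi) + 1), over the partitions pi of {0..m-1}, b(pi) being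
   their number of blocks.  Claesson's insertion turns pi into a 1-23-avoiding
   word, and this yields two injections into the 1-23-4-avoiding permutations of
   {0..m}: insert the maximum m anywhere in the word of pi, or, for a set S of
   blocks of pi, write the word of the blocks in S, then m, then the reverse of
   the dual word (built from block maxima) of the other blocks, which avoids
   12-3.  Hence sum_pi (m + 1) <= alpha_{m+1} and sum_pi 2^b(pi) <= alpha_{m+1}.
   As K (b + 1) <= (m + 1) + 2^b whenever K 2^K <= m + 1, we get
   K B_{m+1} <= 2 alpha_{m+1}, so B_n / alpha_n <= 2 / K eventually, for all K. *)

From HB Require Import structures.
From mathcomp Require Import all_boot all_order all_algebra all_fingroup.
From mathcomp Require Import zify.

Set Implicit Arguments. Unset Strict Implicit. Unset Printing Implicit Defensive.

Section Insert.
Variable T : Type.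
Implicit Types (x : T) (s : seq T).

Definition insert p x s := take p s ++ x :: drop p s.

Lemma size_insert p x s : size (insert p x s) = (size s).+1.
Proof. by rewrite /insert size_cat /= addnS -size_cat cat_take_drop. Qed.

Lemma nth_insert x0 p x s i : p <= size s ->
  nth x0 (insert p x s) i = if i == p then x else nth x0 s (unbump p i).
Proof.
move=> le_ps; rewrite /insert /unbump nth_cat size_takel //.
case: ltngtP => [lt_ip | lt_pi | ->]; last by rewrite subnn.
  by rewrite subn0 nth_take.
rewrite subn1 -[i - p]prednK ?subn_gt0 //= nth_drop; congr nth; lia.
Qed.

End Insert.

Section InsertEq.
Variable T : eqType.
Implicit Types (x : T) (s : seq T).

Lemma perm_insert p x s : perm_eq (insert p x s) (x :: s).
Proof. by rewrite /insert -cat1s perm_catCA /= perm_cons cat_take_drop. Qed.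

Lemma index_insert p x s : x \notin s -> p <= size s -> index x (insert p x s) = p.
Proof.
move=> xNs le_ps; rewrite /insert index_cat size_takel //= eqxx addn0.
by case: ifP => // /mem_take; rewrite (negbTE xNs).
Qed.

Lemma filter_insert p x s : x \notin s -> filter (predC1 x) (insert p x s) = s.
Proof.
move=> xNs; rewrite /insert filter_cat /= eqxx -filter_cat cat_take_drop.
by apply/all_filterP/allP => y ys /=; apply: contraNneq xNs => <-.
Qed.

Lemma cat_cons_inj x s1 s2 t1 t2 : x \notin s1 -> x \notin s2 ->
  s1 ++ x :: t1 = s2 ++ x :: t2 -> s1 = s2 /\ t1 = t2.
Proof.
move=> xNs1 xNs2 eq_st.
have eq_size : size s1 = size s2.
  by move: (congr1 (index x) eq_st); rewrite !index_cat (negbTE xNs1) (negbTE xNs2) /= eqxx !addn0.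
by move/eqP: eq_st; rewrite eqseq_cat // => /andP[/eqP -> /eqP [->]].
Qed.

End InsertEq.

Definition occurs_1_23 (prec : rel nat) (s : seq nat) a b :=
  [&& a < b, b.+1 < size s, prec (nth 0 s a) (nth 0 s b) & prec (nth 0 s b) (nth 0 s b.+1)].

Definition avoids_1_23 prec s := forall a b, ~~ occurs_1_23 prec s a b.

Definition occurs_12_3 (s : seq nat) b d :=
  [&& b.+1 < d, d < size s, nth 0 s b < nth 0 s b.+1 & nth 0 s b.+1 < nth 0 s d].

Definition avoids_12_3 s := forall b d, ~~ occurs_12_3 s b d.

Definition has_1_23_4 s := exists a b d, occurs_1_23 ltn s a b && occurs_12_3 s b d.

Section InsertMax.
Variable prec : rel nat.
Hypotheses (prec_irr : irreflexive prec) (prec_trans : transitive prec).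
Variables (p x : nat) (c : seq nat).
Hypotheses (le_pc : p <= size c) (prec_x : {in c, forall z, prec z x}).

Lemma insert_max_not_prec j : j <= size c ->
  ~~ prec (nth 0 (insert p x c) p) (nth 0 (insert p x c) j).
Proof.
rewrite !nth_insert // eqxx => le_jc; apply/negP; case: eqP => [_ | /eqP j_p] prec_xy.
  by rewrite prec_irr in prec_xy.
have c_j : nth 0 c (unbump p j) \in c.
  by apply: mem_nth; change (unbump p j < size c); rewrite /unbump; lia.
by move: (prec_trans prec_xy (prec_x c_j)); rewrite prec_irr.
Qed.

Lemma occurs_1_23_insert a b : occurs_1_23 prec (insert p x c) a b ->
  [/\ a < b, b.+1 = p & prec (nth 0 c a) (nth 0 c b)] \/
  [/\ a != p, b != p, b.+1 != p & occurs_1_23 prec c (unbump p a) (unbump p b)].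
Proof.
rewrite /occurs_1_23 size_insert ltnS => /and4P[lt_ab lt_bc lt1 lt2].
have [a_p | a_p] := eqVneq a p.
  by rewrite a_p in lt1; case/negP: (insert_max_not_prec (ltnW lt_bc)).
have [b_p | b_p] := eqVneq b p.
  by rewrite b_p in lt2 lt_bc; case/negP: (insert_max_not_prec lt_bc).
rewrite !nth_insert // (negbTE a_p) (negbTE b_p) in lt1 lt2.
have [b1_p | b1_p] := eqVneq b.+1 p.
  have [ua ub] : unbump p a = a /\ unbump p b = b by rewrite /unbump; lia.
  by left; split=> //; rewrite -[a]ua -[b]ub.
rewrite (negbTE b1_p) in lt2; right; split=> //.
have ub1 : unbump p b.+1 = (unbump p b).+1 by rewrite /unbump; lia.
by rewrite /occurs_1_23 lt1 -ub1 lt2 andbT /unbump; lia.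
Qed.
End InsertMax.

Lemma has_1_23_4_insert_max p M (c : seq nat) : p <= size c -> {in c, forall z, z < M} ->
  has_1_23_4 (insert p M c) ->
  exists a b, occurs_1_23 ltn c a b /\ (b.+1 < p \/ p <= b /\ exists d, occurs_12_3 c b d).
Proof.
move=> le_pc lt_M [a [b [d /andP[occ]]]].
rewrite /occurs_12_3 size_insert ltnS => /and4P[lt_bd le_dc _ lt3].
case: (occurs_1_23_insert ltnn ltn_trans le_pc lt_M occ) => [[_ b1_p _] | [a_p b_p b1_p occ']].
  by rewrite b1_p in lt3; case/negP: (insert_max_not_prec ltnn ltn_trans le_pc lt_M le_dc).
exists (unbump p a), (unbump p b); split=> //.
have [lt_b1p | le_pb1] := ltnP b.+1 p.
  by left; rewrite /unbump; lia.
right; split; first by rewrite /unbump; lia.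
exists (unbump p d).
have ub1 : unbump p b.+1 = (unbump p b).+1 by rewrite /unbump; lia.
have d_p : d != p by lia.
rewrite !nth_insert // (negbTE b1_p) (negbTE d_p) ub1 in lt3.
by case/and4P: occ' => _ _ _ ->; rewrite /occurs_12_3 lt3 !andbT /unbump; lia.
Qed.

Lemma occurs_1_23_catl prec (s t : seq nat) a b : b.+1 < size s ->
  occurs_1_23 prec (s ++ t) a b = occurs_1_23 prec s a b.
Proof.
move=> lt_bs; rewrite /occurs_1_23 size_cat !nth_cat lt_bs (ltnW lt_bs) ltn_addr //.
by case: ltnP => // lt_ab; rewrite (ltn_trans lt_ab (ltnW lt_bs)).
Qed.

Lemma occurs_12_3_catr (s t : seq nat) b d : size s <= b ->
  occurs_12_3 (s ++ t) b d = occurs_12_3 t (b - size s) (d - size s).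
Proof.
move=> le_sb; rewrite /occurs_12_3 size_cat !nth_cat subSn //.
have [-> ->] : b < size s = false /\ b.+1 < size s = false by split; lia.
case: (ltnP b.+1 d) => lt_bd; last by have -> : (b - size s).+1 < d - size s = false by lia.
have -> : d < size s = false by lia.
by congr andb; lia.
Qed.

Lemma occurs_12_3_rev (r : seq nat) b d :
  occurs_12_3 (rev r) b d -> occurs_1_23 gtn r (size r - d.+1) (size r - b.+2).
Proof.
rewrite /occurs_12_3 size_rev => /and4P[lt_bd lt_dr].
rewrite !nth_rev; try lia.
move=> l1 l2; rewrite /occurs_1_23 /=.
have -> : (size r - b.+2).+1 = size r - b.+1 by lia.
by rewrite l1 l2 !andbT; lia.
Qed.

Lemma avoids_12_3_rev r : avoids_1_23 gtn r -> avoids_12_3 (rev r).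
Proof. by move=> av b d; apply: contra (av _ _); apply: occurs_12_3_rev. Qed.

Lemma insert_max_avoids_1_23_4 p M (c : seq nat) : avoids_1_23 ltn c ->
  p <= size c -> {in c, forall z, z < M} -> ~ has_1_23_4 (insert p M c).
Proof.
by move=> av le_pc lt_M /(has_1_23_4_insert_max le_pc lt_M) [a [b [occ _]]]; case/negP: (av a b).
Qed.

Lemma cat_max_avoids_1_23_4 M (s t : seq nat) : avoids_1_23 ltn s -> avoids_12_3 t ->
  {in s ++ t, forall z, z < M} -> ~ has_1_23_4 (s ++ M :: t).
Proof.
move=> av_s av_t lt_M.
have -> : s ++ M :: t = insert (size s) M (s ++ t).
  by rewrite /insert take_size_cat // drop_size_cat.
case/(has_1_23_4_insert_max _ lt_M) => [|a [b [occ [lt_bs | [le_sb [d occ']]]]]].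
- by rewrite size_cat leq_addr.
- by case/negP: (av_s a b); rewrite -(occurs_1_23_catl _ t).
- by case/negP: (av_t (b - size s) (d - size s)); rewrite -occurs_12_3_catr.
Qed.

Section BlockWord.
Variable prec : rel nat.
Hypotheses (prec_irr : irreflexive prec) (prec_trans : transitive prec).
Implicit Types (h : nat -> nat) (l w : seq nat).

Definition min_reps h l := sorted prec l /\
  {in l, forall j, [/\ h j \in l, h j = j \/ prec (h j) j & h (h j) = h j]}.

(* Claesson's insertion: an element opening its block goes to the front, any
   other one right after its representative. *)
Definition word_step h w i :=
  insert (if h i == i then 0 else (index (h i) w).+1) i w.

Definition block_word h l := foldl (word_step h) [::] l.

(* The invariant making [word_step] preserve 1-23 avoidance. *)
Definition reps_prefix_min h w := forall j k, j < k -> k < size w ->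
  h (nth 0 w k) = nth 0 w k -> prec (nth 0 w k) (nth 0 w j).

Lemma block_word_rcons h l i : block_word h (rcons l i) = word_step h (block_word h l) i.
Proof. by rewrite /block_word foldl_rcons. Qed.

Lemma perm_block_word h l : perm_eq (block_word h l) l.
Proof.
elim/last_ind: l => [|l i IHl] //; rewrite block_word_rcons /word_step.
by rewrite (permPl (perm_insert _ _ _)) perm_sym perm_rcons perm_cons perm_sym.
Qed.

Lemma min_reps_rcons h l i : min_reps h (rcons l i) ->
  [/\ min_reps h l, {in l, forall z, prec z i}, i \notin l &
      h i = i \/ h i \in l /\ h (h i) = h i].
Proof.
case=> sorted_li reps_li; move: (sorted_li).
rewrite sorted_pairwise // -cats1 pairwise_cat => /and3P[/allrelP lt_i pw_l _].
have {}lt_i : {in l, forall z, prec z i} by move=> z zl; apply: lt_i; rewrite ?inE.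
have iNl : i \notin l by apply/negP => /lt_i; rewrite prec_irr.
have li j : j \in l -> j \in rcons l i by rewrite mem_rcons inE => ->; rewrite orbT.
split=> //.
- split; first by rewrite sorted_pairwise.
  move=> j jl; have [] := reps_li j (li j jl); rewrite mem_rcons inE.
  case/orP=> [/eqP hj_i [hj_j | lt_hj] hhj|]; last by split.
  + by move: iNl; rewrite -hj_i hj_j jl.
  + by move: (lt_i j jl); rewrite -hj_i => /(prec_trans lt_hj); rewrite prec_irr.
- have [] := reps_li i; first by rewrite mem_rcons mem_head.
  rewrite mem_rcons inE => /orP[/eqP -> _ _ | hil [-> | _] hhi]; [by left | by left | by right].
Qed.

Lemma avoids_1_23_insert_max w x p : avoids_1_23 prec w ->
  {in w, forall z, prec z x} -> p <= size w ->
  (forall j, j < p.-1 -> prec (nth 0 w p.-1) (nth 0 w j)) ->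
  avoids_1_23 prec (insert p x w).
Proof.
move=> av lt_x le_pw pmin a b; apply/negP.
case/(occurs_1_23_insert prec_irr prec_trans le_pw lt_x) => [[lt_ab b1_p prec_ab] | [_ _ _]].
  by move: (pmin a); rewrite -b1_p => /(_ lt_ab) /(prec_trans prec_ab); rewrite prec_irr.
by apply/negP.
Qed.

Lemma reps_prefix_min_insert h w x p : reps_prefix_min h w ->
  {in w, forall z, prec z x} -> p <= size w -> (h x = x -> p = 0) ->
  reps_prefix_min h (insert p x w).
Proof.
move=> pmin lt_x le_pw hx j k lt_jk; rewrite size_insert ltnS => le_kw.
rewrite !nth_insert //; have [k_p | k_p] := eqVneq k p; first by move=> /hx; lia.
have [_ | j_p] := eqVneq j p => hk.
  by apply: lt_x; apply: mem_nth; change (unbump p k < size w); rewrite /unbump; lia.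
by apply: pmin => //; rewrite /unbump; lia.
Qed.

Lemma block_word_invariants h l : min_reps h l ->
  avoids_1_23 prec (block_word h l) /\ reps_prefix_min h (block_word h l).
Proof.
elim/last_ind: l => [_ | l i IHl]; first by split=> [a b | j k _ //]; rewrite /occurs_1_23 /= andbF.
case/min_reps_rcons=> reps_l lt_i _ hi; have [av pmin] := IHl reps_l.
have mem_w z : (z \in block_word h l) = (z \in l) by rewrite (perm_mem (perm_block_word h l)).
have lt_iw : {in block_word h l, forall z, prec z i} by move=> z; rewrite mem_w; apply: lt_i.
rewrite block_word_rcons /word_step; case: eqP => [hii | hi_i].
  by split; [apply: avoids_1_23_insert_max | apply: reps_prefix_min_insert].
case: hi => [// | [hil hhi]]; rewrite -mem_w in hil.
have lt_idx : index (h i) (block_word h l) < size (block_word h l) by rewrite index_mem.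
split; [apply: avoids_1_23_insert_max | apply: reps_prefix_min_insert] => // j lt_j.
by apply: pmin => //; rewrite nth_index.
Qed.

Definition left_neighbour w x := if index x w is j.+1 then nth 0 w j else x.

Lemma left_neighbour_step h w i : i \notin w -> h i = i \/ h i \in w ->
  left_neighbour (word_step h w i) i = h i.
Proof.
move=> iNw hi; rewrite /left_neighbour /word_step.
case: eqP => [-> | hi_i]; first by rewrite index_insert.
have lt_idx : index (h i) w < size w by rewrite index_mem; case: hi.
rewrite index_insert // nth_insert //.
have -> : unbump (index (h i) w).+1 (index (h i) w) = index (h i) w by rewrite /unbump; lia.
by rewrite ifN_eq ?nth_index ?neq_ltn ?ltnSn // -index_mem.
Qed.

Lemma block_word_inj h1 h2 l : min_reps h1 l -> min_reps h2 l ->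
  block_word h1 l = block_word h2 l -> {in l, h1 =1 h2}.
Proof.
elim/last_ind: l => [// | l i IHl].
case/min_reps_rcons=> reps1 _ iNl hi1; case/min_reps_rcons=> reps2 _ _ hi2.
rewrite !block_word_rcons => eq_step.
have mem_w h z : (z \in block_word h l) = (z \in l) by rewrite (perm_mem (perm_block_word h l)).
have eq_w : block_word h1 l = block_word h2 l.
  by move: (congr1 (filter (predC1 i)) eq_step); rewrite /word_step !filter_insert ?mem_w.
move=> j; rewrite mem_rcons inE => /predU1P[-> | jl]; last exact: IHl.
have rep_cases h : h i = i \/ h i \in l /\ h (h i) = h i -> h i = i \/ h i \in l.
  by case=> [| []]; auto.
have [{}hi1 {}hi2] := (rep_cases _ hi1, rep_cases _ hi2).
rewrite -(left_neighbour_step (h := h1) (w := block_word h1 l)) ?mem_w // eq_step.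
by rewrite left_neighbour_step ?mem_w.
Qed.

End BlockWord.

Lemma gtn_trans : transitive gtn.
Proof. by move=> y x z /= lt_yx lt_zy; apply: ltn_trans lt_zy lt_yx. Qed.

Lemma leq_last_sorted (s : seq nat) x d : sorted leq s -> x \in s -> x <= last d s.
Proof.
elim: s d => [// | y s IHs] d sorted_ys; rewrite inE => /predU1P[-> | xs].
  move: sorted_ys; rewrite /= (path_sortedE leq_trans) => /andP[/allP le_y _].
  by case: s le_y {IHs} => [// | z s] le_y; apply: le_y; apply: mem_last.
exact: IHs (path_sorted sorted_ys) xs.
Qed.

(* [s] encodes the partition of [0, size s) into the fibres of [rep s]; under
   [rep_seq s], [rep s i] is the least element of the block of [i].  Out of
   range, [rep s i = i]. *)
Definition rep (s : seq nat) i := nth i s i.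

Definition rep_seq (s : seq nat) :=
  all (fun i => (rep s i <= i) && (rep s (rep s i) == rep s i)) (iota 0 (size s)).

Definition block_max (s : seq nat) i :=
  last i [seq j <- iota 0 (size s) | rep s j == rep s i].

Lemma rep_nth s i : i < size s -> rep s i = nth 0 s i.
Proof. by move=> lt_is; rewrite /rep (set_nth_default 0). Qed.

Lemma eq_from_rep s1 s2 : size s1 = size s2 ->
  (forall i, i < size s1 -> rep s1 i = rep s2 i) -> s1 = s2.
Proof.
move=> eq_size eq_rep; apply: (eq_from_nth (x0 := 0)) => // i lt_is.
by rewrite -rep_nth // eq_rep // rep_nth // -eq_size.
Qed.

Section RepSeq.
Variable s : seq nat.

Lemma rep_le : rep_seq s -> forall i, rep s i <= i.
Proof.
move=> /allP rs i; have [lt_is | le_si] := ltnP i (size s); last by rewrite /rep nth_default.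
have i_iota : i \in iota 0 (size s) by rewrite mem_iota.
by case/andP: (rs i i_iota).
Qed.

Lemma rep_idem : rep_seq s -> forall i, rep s (rep s i) = rep s i.
Proof.
move=> /allP rs i; have [lt_is | le_si] := ltnP i (size s); last by rewrite /rep !nth_default.
have i_iota : i \in iota 0 (size s) by rewrite mem_iota.
by case/andP: (rs i i_iota) => _ /eqP.
Qed.

Lemma block_max_mem i : i < size s ->
  block_max s i \in [seq j <- iota 0 (size s) | rep s j == rep s i].
Proof.
move=> lt_is; rewrite /block_max.
have := mem_last i [seq j <- iota 0 (size s) | rep s j == rep s i].
by rewrite inE => /predU1P[-> | //]; rewrite mem_filter eqxx mem_iota.
Qed.

Lemma rep_block_max i : i < size s -> rep s (block_max s i) = rep s i.
Proof. by move/block_max_mem; rewrite mem_filter => /andP[/eqP]. Qed.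

Lemma block_max_lt i : i < size s -> block_max s i < size s.
Proof. by move/block_max_mem; rewrite mem_filter mem_iota => /and3P[]. Qed.

Lemma leq_block_max i : i < size s -> i <= block_max s i.
Proof.
move=> lt_is; apply: leq_last_sorted; last by rewrite mem_filter eqxx mem_iota.
exact/sorted_filter/iota_sorted/leq_trans.
Qed.

Lemma block_max_eq i j : i < size s -> j < size s -> rep s i = rep s j ->
  block_max s i = block_max s j.
Proof.
move=> lt_is lt_js eq_rep; rewrite /block_max eq_rep.
have : j \in [seq k <- iota 0 (size s) | rep s k == rep s j] by rewrite mem_filter eqxx mem_iota.
by case: [seq k <- _ | _].
Qed.

Lemma block_max_idem i : i < size s -> block_max s (block_max s i) = block_max s i.
Proof. by move=> lt_is; apply: block_max_eq; rewrite ?block_max_lt ?rep_block_max. Qed.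

End RepSeq.

Definition min_word s (R : pred nat) :=
  block_word (rep s) [seq i <- iota 0 (size s) | R (rep s i)].

(* The dual construction on the blocks rejected by [R]: elements are inserted in
   decreasing order after their block maximum, so that the reversed word
   avoids 12-3. *)
Definition max_word s (R : pred nat) :=
  block_word (block_max s) [seq i <- rev (iota 0 (size s)) | ~~ R (rep s i)].

Lemma min_reps_min_word s R : rep_seq s ->
  min_reps ltn (rep s) [seq i <- iota 0 (size s) | R (rep s i)].
Proof.
move=> rs; split; first exact: (sorted_filter ltn_trans _ (iota_ltn_sorted 0 _)).
move=> j; rewrite mem_filter mem_iota => /and3P[Rj _ lt_js].
have le_rj := rep_le rs j; split; last exact: rep_idem.
- by rewrite mem_filter mem_iota rep_idem // Rj (leq_ltn_trans le_rj).
- by move: le_rj; rewrite leq_eqVlt => /predU1P[]; [left | right].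
Qed.

Lemma min_reps_max_word s R : rep_seq s ->
  min_reps gtn (block_max s) [seq i <- rev (iota 0 (size s)) | ~~ R (rep s i)].
Proof.
move=> rs; split.
  by apply: (sorted_filter gtn_trans); rewrite rev_sorted; apply: iota_ltn_sorted.
move=> j; rewrite mem_filter mem_rev mem_iota => /and3P[Rj _ lt_js].
split; last exact: block_max_idem.
- by rewrite mem_filter mem_rev mem_iota rep_block_max // Rj block_max_lt.
- by move: (leq_block_max lt_js); rewrite leq_eqVlt => /predU1P[]; [left | right].
Qed.

Lemma perm_min_max_word s R :
  perm_eq (min_word s R ++ rev (max_word s R)) (iota 0 (size s)).
Proof.
rewrite perm_sym -(perm_filterC (fun i => R (rep s i)) (iota 0 (size s))) perm_sym.
apply: perm_cat.
  exact: perm_block_word.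
by rewrite perm_rev (permPl (perm_block_word _ _)) filter_rev perm_rev.
Qed.

Lemma mem_min_word s R i : i < size s -> (i \in min_word s R) = R (rep s i).
Proof.
by move=> lt_is; rewrite (perm_mem (perm_block_word _ _)) mem_filter mem_iota /= lt_is andbT.
Qed.

Lemma mem_max_word s R i : i < size s -> (i \in max_word s R) = ~~ R (rep s i).
Proof.
move=> lt_is; rewrite (perm_mem (perm_block_word _ _)).
by rewrite mem_filter mem_rev mem_iota /= lt_is andbT.
Qed.

Lemma min_word_avoids s R : rep_seq s -> avoids_1_23 ltn (min_word s R).
Proof. by move=> rs; case: (block_word_invariants ltnn ltn_trans (min_reps_min_word R rs)). Qed.

Lemma rev_max_word_avoids s R : rep_seq s -> avoids_12_3 (rev (max_word s R)).
Proof.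
move=> rs; apply: avoids_12_3_rev.
by case: (block_word_invariants ltnn gtn_trans (min_reps_max_word R rs)).
Qed.

Lemma min_word_inj s1 s2 R1 R2 : rep_seq s1 -> rep_seq s2 ->
  min_word s1 R1 = min_word s2 R2 -> {in min_word s1 R1, rep s1 =1 rep s2}.
Proof.
move=> rs1 rs2 eq_w.
have reps1 := min_reps_min_word R1 rs1; have reps2 := min_reps_min_word R2 rs2.
have mem_l s R i : (i \in min_word s R) = (i \in [seq i <- iota 0 (size s) | R (rep s i)]).
  exact: (perm_mem (perm_block_word _ _) i).
have eq_l : [seq i <- iota 0 (size s1) | R1 (rep s1 i)] =
            [seq i <- iota 0 (size s2) | R2 (rep s2 i)].
  apply: (irr_sorted_eq ltn_trans ltnn); [exact: reps1.1 | exact: reps2.1 |] => i.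
  by rewrite -!mem_l eq_w.
move=> i; rewrite mem_l; apply: (block_word_inj ltnn ltn_trans reps1); first by rewrite eq_l.
by move: eq_w; rewrite /min_word eq_l.
Qed.

Lemma max_word_inj s1 s2 R1 R2 : rep_seq s1 -> rep_seq s2 ->
  max_word s1 R1 = max_word s2 R2 -> {in max_word s1 R1, block_max s1 =1 block_max s2}.
Proof.
move=> rs1 rs2 eq_w.
have reps1 := min_reps_max_word R1 rs1; have reps2 := min_reps_max_word R2 rs2.
have mem_l s R i :
    (i \in max_word s R) = (i \in [seq i <- rev (iota 0 (size s)) | ~~ R (rep s i)]).
  exact: (perm_mem (perm_block_word _ _) i).
have eq_l : [seq i <- rev (iota 0 (size s1)) | ~~ R1 (rep s1 i)] =
            [seq i <- rev (iota 0 (size s2)) | ~~ R2 (rep s2 i)].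
  apply: (irr_sorted_eq gtn_trans ltnn); [exact: reps1.1 | exact: reps2.1 |] => i.
  by rewrite -!mem_l eq_w.
move=> i; rewrite mem_l; apply: (block_word_inj ltnn gtn_trans reps1); first by rewrite eq_l.
by move: eq_w; rewrite /max_word eq_l.
Qed.

Lemma rep_le_of_block_max s1 s2 (A : {pred nat}) : rep_seq s1 -> rep_seq s2 ->
  size s1 = size s2 -> {in A, forall i, i < size s1 /\ rep s2 i \in A} ->
  {in A, block_max s1 =1 block_max s2} -> {in A, forall i, rep s1 i <= rep s2 i}.
Proof.
move=> rs1 rs2 eq_size closedA eq_max i iA.
have [lt_is1 rA] := closedA i iA; have [lt_rs1 _] := closedA _ rA.
have lt_is2 : i < size s2 by rewrite -eq_size.
have lt_rs2 : rep s2 i < size s2 by rewrite -eq_size.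
have : block_max s1 (rep s2 i) = block_max s1 i.
  by rewrite !eq_max // (block_max_eq lt_rs2 lt_is2) ?rep_idem.
move/(congr1 (rep s1)); rewrite !rep_block_max // => <-.
exact: rep_le.
Qed.

Definition insert_perm s p := insert p (size s) (min_word s predT).

Definition split_perm s R := min_word s R ++ size s :: rev (max_word s R).

Lemma perm_min_word_predT s : perm_eq (min_word s predT) (iota 0 (size s)).
Proof.
rewrite (permPl (perm_block_word _ _)) (_ : filter _ _ = iota 0 (size s)) //.
exact/all_filterP/allP.
Qed.

Lemma iotaS_rcons n : iota 0 n.+1 = rcons (iota 0 n) n.
Proof. by rewrite -addn1 iotaD cats1. Qed.

Lemma perm_insert_perm s p : perm_eq (insert_perm s p) (iota 0 (size s).+1).
Proof.
rewrite (permPl (perm_insert _ _ _)) iotaS_rcons perm_sym perm_rcons perm_cons perm_sym.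
exact: perm_min_word_predT.
Qed.

Lemma perm_split_perm s R : perm_eq (split_perm s R) (iota 0 (size s).+1).
Proof.
rewrite /split_perm -cat1s perm_catCA iotaS_rcons perm_sym perm_rcons perm_cons perm_sym.
exact: perm_min_max_word.
Qed.

Lemma insert_perm_avoids s p : rep_seq s -> p <= size s -> ~ has_1_23_4 (insert_perm s p).
Proof.
move=> rs le_ps; apply: insert_max_avoids_1_23_4; first exact: min_word_avoids.
  by rewrite (perm_size (perm_min_word_predT s)) size_iota.
by move=> z; rewrite (perm_mem (perm_min_word_predT s)) mem_iota.
Qed.

Lemma split_perm_avoids s R : rep_seq s -> ~ has_1_23_4 (split_perm s R).
Proof.
move=> rs; apply: cat_max_avoids_1_23_4; [exact: min_word_avoids | exact: rev_max_word_avoids |].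
by move=> z; rewrite (perm_mem (perm_min_max_word s R)) mem_iota.
Qed.

Lemma insert_perm_inj s1 s2 p1 p2 : rep_seq s1 -> rep_seq s2 -> size s1 = size s2 ->
  p1 <= size s1 -> p2 <= size s2 -> insert_perm s1 p1 = insert_perm s2 p2 ->
  s1 = s2 /\ p1 = p2.
Proof.
move=> rs1 rs2 eq_size le_ps1 le_ps2; rewrite /insert_perm.
have notin s : size s \notin min_word s predT.
  by rewrite (perm_mem (perm_min_word_predT s)) mem_iota /= ltnn.
have size_w s : size (min_word s predT) = size s.
  by rewrite (perm_size (perm_min_word_predT s)) size_iota.
have notin2 := notin s2; rewrite -eq_size in notin2 *.
move=> eq_ins; split; last first.
  by move: (congr1 (index (size s1)) eq_ins); rewrite !index_insert ?size_w.
have eq_w : min_word s1 predT = min_word s2 predT.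
  by move: (congr1 (filter (predC1 (size s1))) eq_ins); rewrite !filter_insert.
apply: eq_from_rep => // i lt_is; apply: (min_word_inj rs1 rs2 eq_w).
by rewrite mem_min_word.
Qed.

Lemma max_word_rep_closed s R : rep_seq s ->
  {in max_word s R, forall i, i < size s /\ rep s i \in max_word s R}.
Proof.
move=> rs i; rewrite (perm_mem (perm_block_word _ _)) mem_filter mem_rev mem_iota.
case/and3P=> Rr _ lt_is; split=> //.
by rewrite mem_max_word ?rep_idem // (leq_ltn_trans (rep_le rs i)).
Qed.

Lemma max_word_rep_eq s1 s2 R1 R2 : rep_seq s1 -> rep_seq s2 -> size s1 = size s2 ->
  max_word s1 R1 = max_word s2 R2 -> {in max_word s1 R1, rep s1 =1 rep s2}.
Proof.
move=> rs1 rs2 eq_size eq_max i iA.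
have eq_bmax := max_word_inj rs1 rs2 eq_max.
have closed1 := max_word_rep_closed (R := R1) rs1.
have closed2 := max_word_rep_closed (R := R2) rs2; rewrite -eq_max in closed2.
apply/eqP; rewrite eqn_leq; apply/andP; split.
  apply: (rep_le_of_block_max (A := mem (max_word s1 R1))) => // j jA.
  by split; [exact: (closed1 j jA).1 | exact: (closed2 j jA).2].
apply: (rep_le_of_block_max (A := mem (max_word s1 R1))) => // [j jA | j jA].
  by split; [exact: (closed2 j jA).1 | exact: (closed1 j jA).2].
by rewrite eq_bmax.
Qed.

Lemma split_perm_inj s1 s2 R1 R2 : rep_seq s1 -> rep_seq s2 -> size s1 = size s2 ->
  split_perm s1 R1 = split_perm s2 R2 ->
  s1 = s2 /\ {in [pred i | (i < size s1) && (rep s1 i == i)], R1 =1 R2}.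
Proof.
move=> rs1 rs2 eq_size; rewrite /split_perm -eq_size.
have notin s R : size s \notin min_word s R.
  apply: contraT; rewrite negbK => in_w.
  have := perm_mem (perm_min_max_word s R) (size s).
  by rewrite mem_cat in_w mem_iota /= ltnn.
have notin2 := notin s2 R2; rewrite -eq_size in notin2.
case/(cat_cons_inj (notin s1 R1) notin2) => eq_min /(can_inj revK) eq_max.
have eq_rep i : i < size s1 -> rep s1 i = rep s2 i.
  move=> lt_is; case R1i : (R1 (rep s1 i)).
    by apply: (min_word_inj rs1 rs2 eq_min); rewrite mem_min_word.
  by apply: (max_word_rep_eq rs1 rs2 eq_size eq_max); rewrite mem_max_word ?R1i.
have eq_s : s1 = s2 by apply: eq_from_rep.
split=> // i /andP[lt_is /eqP fix_i].
by rewrite -{1}fix_i -mem_min_word // eq_min mem_min_word -?eq_s // fix_i.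
Qed.

Lemma leq_card_in_set (T T' : finType) (A : {pred T}) (B : {pred T'}) (f : T -> T') :
  {in A &, injective f} -> {in A, forall x, f x \in B} -> #|A| <= #|B|.
Proof.
move=> inj_f fAB; rewrite -(card_in_imset inj_f); apply/subset_leq_card/subsetP.
by move=> _ /imsetP[x xA ->]; apply: fAB.
Qed.

Lemma card_dep_pairs (I J : finType) (A : {set I}) (B : I -> {set J}) :
  #|[set x : I * J | (x.1 \in A) && (x.2 \in B x.1)]| = \sum_(i in A) #|B i|.
Proof.
rewrite (eq_bigr (fun i => \sum_(j in B i) 1)); last by move=> i _; rewrite sum1_card.
by rewrite pair_big_dep -sum1_card; apply: eq_bigl => -[i j]; rewrite inE.
Qed.

Section PermOfSeq.
Variable m : nat.
Local Notation n := m.+1.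

(* The default [1] is a junk value, for [s] not a permutation of [0, n). *)
Definition perm_of_seq (s : seq nat) : 'S_n :=
  odflt 1%g [pick p : 'S_n | [forall i, val (p i) == nth 0 s i]].

Lemma perm_of_seqE s : perm_eq s (iota 0 n) -> forall i, val (perm_of_seq s i) = nth 0 s i.
Proof.
move=> perm_s; rewrite /perm_of_seq; case: pickP => [p /forallP p_s i | no_p]; first exact/eqP.
have size_s : size s = n by rewrite (perm_size perm_s) size_iota.
have lt_s (i : 'I_n) : nth 0 s i < n.
  have : nth 0 s i \in s by apply: mem_nth; rewrite size_s.
  by rewrite (perm_mem perm_s) mem_iota.
pose f (i : 'I_n) : 'I_n := inord (nth 0 s i).
have inj_f : injective f.
  move=> i j /(congr1 (@nat_of_ord _)); rewrite /f !inordK // => /eqP.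
  by rewrite nth_uniq ?size_s // ?(perm_uniq perm_s) ?iota_uniq // => /eqP /val_inj.
by case/negP: (no_p (perm inj_f)); apply/forallP => i; rewrite permE /f /= inordK.
Qed.

Lemma perm_of_seq_inj s1 s2 : perm_eq s1 (iota 0 n) -> perm_eq s2 (iota 0 n) ->
  perm_of_seq s1 = perm_of_seq s2 -> s1 = s2.
Proof.
move=> perm1 perm2 eq_p; have size1 := perm_size perm1; have size2 := perm_size perm2.
rewrite size_iota in size1 size2.
apply: (eq_from_nth (x0 := 0)) => [| i]; first by rewrite size1 size2.
rewrite size1 => lt_in.
by rewrite -(perm_of_seqE perm1 (Ordinal lt_in)) -(perm_of_seqE perm2 (Ordinal lt_in)) eq_p.
Qed.

Lemma perm_of_seq_avoids s : perm_eq s (iota 0 n) -> ~ has_1_23_4 s ->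
  avoids_1_23_4 (perm_of_seq s).
Proof.
move=> perm_s no_pat; apply/negP => /existsP[a /existsP[b /existsP[b' /existsP[c]]]].
case/and5P=> lt_ab /eqP eq_b' lt_bc; rewrite !perm_of_seqE // => lt1 /andP[lt2 lt3].
apply: no_pat; exists a, b, c.
rewrite /occurs_1_23 /occurs_12_3 (perm_size perm_s) size_iota -eq_b' /=.
by rewrite lt_ab lt1 lt2 lt3 lt_bc !ltn_ord.
Qed.

End PermOfSeq.

Section Counting.
Variable m : nat.
Local Notation n := m.+1.
Implicit Type t : m.-tuple 'I_n.

Definition rep_tuples : {set m.-tuple 'I_n} := [set t : m.-tuple _ | rep_seq (map val t)].

Definition block_mins t : {set 'I_n} := [set v : 'I_n | (val v < m) && (rep (map val t) v == v)].

Lemma size_map_val t : size (map val t) = m.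
Proof. by rewrite size_map size_tuple. Qed.

Lemma map_val_inj : injective (fun t : m.-tuple 'I_n => map val t).
Proof. by move=> t1 t2 /(inj_map val_inj) /val_inj. Qed.

Definition nat_pred_of (R : {set 'I_n}) : pred nat := fun i => (i < n) && (inord i \in R).

Lemma nat_pred_ofE R (v : 'I_n) : nat_pred_of R v = (v \in R).
Proof. by rewrite /nat_pred_of ltn_ord inord_val. Qed.

Definition insert_code (x : m.-tuple 'I_n * 'I_n) : 'S_n :=
  perm_of_seq m (insert_perm (map val x.1) x.2).

Definition split_code (x : m.-tuple 'I_n * {set 'I_n}) : 'S_n :=
  perm_of_seq m (split_perm (map val x.1) (nat_pred_of x.2)).

Lemma sum_rep_tuples_le_alpha : \sum_(t in rep_tuples) n <= alpha_1_23_4 n.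
Proof.
rewrite (eq_bigr (fun=> #|[set: 'I_n]|)); last by move=> t _; rewrite cardsT card_ord.
rewrite -(card_dep_pairs _ (fun=> [set: 'I_n])).
have perm_ins t (v : 'I_n) : perm_eq (insert_perm (map val t) v) (iota 0 n).
  by have := perm_insert_perm (map val t) v; rewrite size_map_val.
have le_v t (v : 'I_n) : val v <= size (map val t) by rewrite size_map_val; exact: ltn_ord v.
have eq_size t1 t2 : size (map val t1) = size (map val t2) by rewrite !size_map_val.
apply: (leq_card_in_set (f := insert_code)) => [[t1 v1] [t2 v2] | [t v]]; rewrite !inE /= ?andbT.
  move=> rs1 rs2 /(perm_of_seq_inj (perm_ins _ _) (perm_ins _ _)).
  case/(insert_perm_inj rs1 rs2 (eq_size _ _) (le_v t1 v1) (le_v t2 v2)).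
  by move=> /map_val_inj -> /val_inj ->.
by move=> rs; apply: perm_of_seq_avoids (perm_ins t v) (insert_perm_avoids rs (le_v t v)).
Qed.

Lemma sum_exp2_block_mins_le_alpha :
  \sum_(t in rep_tuples) 2 ^ #|block_mins t| <= alpha_1_23_4 n.
Proof.
rewrite (eq_bigr (fun t => #|powerset (block_mins t)|)); last by move=> t _; rewrite card_powerset.
rewrite -(card_dep_pairs _ (fun t => powerset (block_mins t))).
have perm_split t R : perm_eq (split_perm (map val t) (nat_pred_of R)) (iota 0 n).
  by have := perm_split_perm (map val t) (nat_pred_of R); rewrite size_map_val.
have eq_size t1 t2 : size (map val t1) = size (map val t2) by rewrite !size_map_val.
apply: (leq_card_in_set (f := split_code)) => [[t1 R1] [t2 R2] | [t R]]; rewrite !inE /=.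
  move=> /andP[rs1 sub1] /andP[rs2 sub2] /(perm_of_seq_inj (perm_split _ _) (perm_split _ _)).
  case/(split_perm_inj rs1 rs2 (eq_size _ _)) => /map_val_inj eq_t eq_R; subst t2; congr pair.
  apply/setP => v; case vB : (v \in block_mins t1).
    by rewrite -!nat_pred_ofE; apply: eq_R; move: vB; rewrite !inE size_map_val.
  have notin (R : {set 'I_n}) : R \subset block_mins t1 -> (v \in R) = false.
    by move=> /subsetP subR; apply/negP => /subR; rewrite vB.
  by rewrite !notin.
case/andP=> rs _.
exact: perm_of_seq_avoids (perm_split t R) (split_perm_avoids (R := nat_pred_of R) rs).
Qed.

End Counting.

Section BlockMinimum.
Variable m : nat.
Local Notation n := m.+1.
Implicit Types P Q : {set {set 'I_n}}.

Definition pmin P (i : 'I_n) : 'I_n := [arg min_(j < i in pblock P i) val j].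

Section Partition.
Variable P : {set {set 'I_n}}.
Hypothesis partP : partition P [set: 'I_n].

Lemma pmin_spec i : pmin P i \in pblock P i /\ {in pblock P i, forall j : 'I_n, pmin P i <= j}.
Proof.
rewrite /pmin; case: arg_minnP => [| j jPi min_j]; last by split=> // k /min_j.
by rewrite mem_pblock (cover_partition partP) inE.
Qed.

Lemma pblock_pmin i : pblock P (pmin P i) = pblock P i.
Proof. exact: same_pblock (partition_trivIset partP) (pmin_spec i).1. Qed.

Lemma eq_pmin i j : (pmin P i == pmin P j) = (pblock P i == pblock P j).
Proof.
apply/eqP/eqP => [eq_ij | eq_ij]; first by rewrite -pblock_pmin eq_ij pblock_pmin.
have [in_i min_i] := pmin_spec i; have [in_j min_j] := pmin_spec j.
rewrite eq_ij in in_i min_i; apply/val_inj/eqP.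
by rewrite eqn_leq min_i // min_j.
Qed.

Lemma pmin_le i : pmin P i <= i.
Proof. by apply: (pmin_spec i).2; rewrite mem_pblock (cover_partition partP) inE. Qed.

Lemma pmin_idem i : pmin P (pmin P i) = pmin P i.
Proof. by apply/eqP; rewrite eq_pmin pblock_pmin. Qed.

Lemma preim_partition_pmin : preim_partition (pmin P) [set: 'I_n] = P.
Proof.
rewrite -{2}(preim_partition_pblock partP); apply: eq_imset => x.
by apply/setP => y; rewrite !inE eq_pmin.
Qed.

End Partition.

Lemma pmin_inj P Q : partition P [set: 'I_n] -> partition Q [set: 'I_n] ->
  pmin P =1 pmin Q -> P = Q.
Proof.
move=> partP partQ eq_PQ; rewrite -(preim_partition_pmin partP) -(preim_partition_pmin partQ).
by apply: eq_imset => x; apply/setP => y; rewrite !inE !eq_PQ.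
Qed.

Definition pmin_tuple P : m.-tuple 'I_n := [tuple pmin P (widen_ord (leqnSn m) i) | i < m].

Lemma rep_pmin_tuple P i : i < m -> rep (map val (pmin_tuple P)) i = pmin P (inord i).
Proof.
move=> lt_im; rewrite rep_nth ?size_map_val // (nth_map ord0) ?size_tuple //.
rewrite (_ : i = Ordinal lt_im) // nth_mktuple; congr (val (pmin P _)).
by apply: val_inj; rewrite /= inordK // ltnW.
Qed.

Lemma mem_rep_tuples_pmin P : partition P [set: 'I_n] -> pmin_tuple P \in rep_tuples m.
Proof.
move=> partP; rewrite inE; apply/allP => i; rewrite size_map_val mem_iota add0n => /andP[_ lt_im].
have le_i : pmin P (inord i) <= i by have := pmin_le partP (inord i); rewrite inordK // ltnW.
rewrite rep_pmin_tuple // le_i rep_pmin_tuple ?(leq_ltn_trans le_i) //.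
by rewrite /= inord_val pmin_idem.
Qed.

Lemma mem_pmin_ord_max P : partition P [set: 'I_n] ->
  pmin P ord_max \in ord_max |: block_mins (pmin_tuple P).
Proof.
move=> partP; rewrite in_setU1; case: eqP => //= ne_max; rewrite inE.
have lt_pm : val (pmin P ord_max) < m.
  have := pmin_le partP ord_max; rewrite /= leq_eqVlt => /predU1P[eq_m | //].
  by case: ne_max; apply: val_inj.
by rewrite lt_pm rep_pmin_tuple //= inord_val pmin_idem.
Qed.

End BlockMinimum.

Lemma bell_le_sum_block_mins m :
  bell m.+1 <= \sum_(t in rep_tuples m) (#|block_mins t| + 1).
Proof.
rewrite (eq_bigr (fun t => #|ord_max |: block_mins t|)); last first.
  by move=> t _; rewrite cardsU1 addnC inE /= ltnn.
rewrite -(card_dep_pairs _ (fun t => ord_max |: block_mins t)) /bell.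
apply: (leq_card_in_set (f := fun P => (pmin_tuple P, pmin P ord_max))).
  move=> P Q; rewrite !inE => partP partQ eq_PQ; apply: pmin_inj => // x.
  have [lt_xm | le_mx] := ltnP x m.
    move: (congr1 (fun y : m.-tuple 'I_m.+1 * 'I_m.+1 => rep (map val y.1) x) eq_PQ) => /=.
    by rewrite !rep_pmin_tuple // inord_val => /val_inj.
  rewrite (_ : x = ord_max); first by case: eq_PQ.
  by apply: val_inj => /=; have := ltn_ord x; lia.
move=> P partP; rewrite inE in partP; rewrite inE; apply/andP.
by split; [exact: (mem_rep_tuples_pmin partP) | exact: (mem_pmin_ord_max partP)].
Qed.

Lemma double_ltn_exp2 k : 3 <= k -> k.*2 < 2 ^ k.
Proof.
elim: k => [// | k IHk]; rewrite leq_eqVlt => /predU1P[<- // | lt_2k].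
by have := IHk lt_2k; rewrite expnS -!muln2 mulSn; move: (expn_gt0 2 k); lia.
Qed.

Lemma sqr_leq_exp2 k : k * k <= (2 ^ k).+1.
Proof.
elim: k => [// | k IHk]; have [lt_k3 | le_3k] := ltnP k 3.
  by case: k lt_k3 {IHk} => [|[|[|]]].
by have := double_ltn_exp2 le_3k; rewrite expnS -muln2; lia.
Qed.

(* If k < 2^K the first summand suffices; otherwise K < k and k^2 <= 2^k + 1. *)
Lemma mul_succ_leq_add_exp2 K N k : K * 2 ^ K <= N -> K * k.+1 <= N + 2 ^ k.
Proof.
move=> le_KN; have [lt_k | le_k] := ltnP k (2 ^ K).
  by apply: leq_trans (leq_addr _ _); apply: leq_trans le_KN; rewrite leq_mul2l lt_k orbT.
have lt_K := ltn_expl K (ltnSn 1); have := sqr_leq_exp2 k; nia.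
Qed.

Lemma bell_mul_le_alpha K m : K * 2 ^ K <= m.+1 -> K * bell m.+1 <= 2 * alpha_1_23_4 m.+1.
Proof.
move=> le_Km; apply: leq_trans (leq_mul (leqnn K) (bell_le_sum_block_mins m)) _.
rewrite big_distrr mul2n -addnn.
apply: leq_trans (leq_add (sum_rep_tuples_le_alpha m) (sum_exp2_block_mins_le_alpha m)).
by rewrite -big_split /=; apply: leq_sum => t _; rewrite addn1 mul_succ_leq_add_exp2.
Qed.

(* Imported only now: MathComp-Analysis rebinds [filter], used above on sequences. *)
From mathcomp Require Import all_classical all_reals all_analysis.
Import Order.TTheory GRing.Theory Num.Theory numFieldNormedType.Exports.
Local Open Scope ring_scope.
Local Open Scope classical_set_scope.

Theorem mainTheorem10 (R : realType) :
  (fun n : nat => (bell n)%:R / (alpha_1_23_4 n)%:R : R) @ \oo --> (0 : R).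
Proof.
apply/cvgrPdist_le => eps eps_gt0.
pose K := Num.bound (2 / eps).
have lt_K : 2 / eps < K%:R by apply: archi_boundP; rewrite divr_ge0 // ltW.
have K_gt0 : (0 : R) < K%:R by apply: lt_trans lt_K; rewrite divr_gt0.
exists (K * 2 ^ K)%N.+1 => // -[// | m] /= lt_m.
rewrite sub0r normrN ger0_norm ?divr_ge0 //.
have [-> | alpha_neq0] := eqVneq (alpha_1_23_4 m.+1) 0%N; first by rewrite invr0 mulr0 ltW.
have alpha_gt0 : (0 : R) < (alpha_1_23_4 m.+1)%:R by rewrite ltr0n lt0n.
rewrite ler_pdivrMr // -(ler_pM2l K_gt0) mulrA.
have le_K : 2 <= K%:R * eps by rewrite -ler_pdivrMr // ltW.
apply: le_trans (ler_wpM2r (ltW alpha_gt0) le_K).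
by rewrite -natrM -(natrM R 2) ler_nat bell_mul_le_alpha // ltnW.
Qed.
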